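(* Let $D$ be a finite category and let $X:D \to \overline{\mathrm{Pro}}(\mathcal{C})$ be a diagram in the image of $j_D$. Then: \begin{enumerate} \item If $\mathcal{C}$ has finite limits, then the limit of $X$ in $\overline{\mathrm{Pro}}(\mathcal{C})$ can be computed levelwise. \item If $\mathcal{C}$ has finite colimits, then the colimit of $X$ in $\overline{\mathrm{Pro}}(\mathcal{C})$ can be computed levelwise. \end{enumerate}
   Context: $\overline{\mathrm{Pro}}(\mathcal{C})$ has objects diagrams $F:A\to\mathcal{C}$ with $A$ a cofinite directed poset of infinite height (poset as category with $u\to v$ iff $u\ge v$), and morphisms $F^A\to G^B$ the classes $[\alpha,\phi]$ of pairs with $\alpha:B\to A$ strictly increasing and $\phi:F\circ\alpha\to G$ natural, identified along chains of relations $(\alpha',\phi')\ge(\alpha,\phi)$ ($\alpha'\ge\alpha$ pointwise and $\phi'_b=\phi_b\circ F(\alpha'(b)\to\alpha(b))$). The natural functor $j_D:\overline{\mathrm{Pro}}(\mathcal{C}^D)\to\overline{\mathrm{Pro}}(\mathcal{C})^D$ sends $X:A\to\mathcal{C}^D$ (viewed as $A\times D\to\mathcal{C}$) to $d\mapsto X(-,d)$. ''Computed levelwise'' means: if $X=j_D(X')$ with $X':A\to\mathcal{C}^D$, then the limit (resp. colimit) of $X$ is the object $A\to\mathcal{C}$, $a\mapsto\lim_D X'(a)$ (resp. $\operatorname{colim}_D X'(a)$). *)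

From Stdlib Require Import List Relations.

Record Cat := {
  ob : Type;
  hom : ob -> ob -> Type;
  heq : forall a b, hom a b -> hom a b -> Prop;
  cid : forall a, hom a a;
  cmp : forall a b c, hom b c -> hom a b -> hom a c }.
Arguments hom {_} _ _.
Arguments heq {_ _ _} _ _.
Arguments cid {_} _.
Arguments cmp {_ _ _ _} _ _.

Record IsCat (C : Cat) : Prop := {
  heq_refl : forall (a b : ob C) (f : hom a b), heq f f;
  heq_sym : forall (a b : ob C) (f g : hom a b), heq f g -> heq g f;
  heq_trans : forall (a b : ob C) (f g h : hom a b), heq f g -> heq g h -> heq f h;
  cmp_cong : forall (a b c : ob C) (f f' : hom b c) (g g' : hom a b),
      heq f f' -> heq g g' -> heq (cmp f g) (cmp f' g');
  cid_l : forall (a b : ob C) (f : hom a b), heq (cmp (cid b) f) f;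
  cid_r : forall (a b : ob C) (f : hom a b), heq (cmp f (cid a)) f;
  cmp_assoc : forall (a b c d : ob C) (f : hom c d) (g : hom b c) (h : hom a b),
      heq (cmp f (cmp g h)) (cmp (cmp f g) h) }.

Arguments heq_refl {C} _ {a b} f.
Arguments heq_sym {C} _ {a b f g} _.
Arguments heq_trans {C} _ {a b f g h} _ _.
Arguments cmp_cong {C} _ {a b c f f' g g'} _ _.
Arguments cid_l {C} _ {a b} f.
Arguments cid_r {C} _ {a b} f.
Arguments cmp_assoc {C} _ {a b c d} f g h.

Definition FiniteCat (J : Cat) : Prop :=
  (exists l : list (ob J), forall a, In a l) /\
  (forall a b : ob J, exists l : list (hom a b),
      forall f : hom a b, exists g, In g l /\ heq f g).

Record Fun (J C : Cat) := {
  fob : ob J -> ob C;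
  fmap : forall a b, hom a b -> hom (fob a) (fob b) }.
Arguments fob {_ _} _ _.
Arguments fmap {_ _} _ {_ _} _.

Record IsFun (J C : Cat) (F : Fun J C) : Prop := {
  fmap_cong : forall (a b : ob J) (f g : hom a b), heq f g -> heq (fmap F f) (fmap F g);
  fmap_id : forall a : ob J, heq (fmap F (cid a)) (cid (fob F a));
  fmap_cmp : forall (a b c : ob J) (f : hom b c) (g : hom a b),
      heq (fmap F (cmp f g)) (cmp (fmap F f) (fmap F g)) }.

Arguments IsFun {J C} F.

Definition IsCone (J C : Cat) (F : Fun J C) (c : ob C)
  (p : forall j, hom c (fob F j)) : Prop :=
  forall (j k : ob J) (f : hom j k), heq (cmp (fmap F f) (p j)) (p k).

Arguments IsCone {J C} F c p.

Definition IsLimit (J C : Cat) (F : Fun J C) (c : ob C)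
  (p : forall j, hom c (fob F j)) : Prop :=
  IsCone F c p /\
  forall (c' : ob C) (p' : forall j, hom c' (fob F j)), IsCone F c' p' ->
    exists u : hom c' c,
      (forall j, heq (cmp (p j) u) (p' j)) /\
      (forall u' : hom c' c, (forall j, heq (cmp (p j) u') (p' j)) -> heq u' u).

Arguments IsLimit {J C} F c p.

Definition IsCocone (J C : Cat) (F : Fun J C) (c : ob C)
  (q : forall j, hom (fob F j) c) : Prop :=
  forall (j k : ob J) (f : hom j k), heq (cmp (q k) (fmap F f)) (q j).

Arguments IsCocone {J C} F c q.

Definition IsColimit (J C : Cat) (F : Fun J C) (c : ob C)
  (q : forall j, hom (fob F j) c) : Prop :=
  IsCocone F c q /\
  forall (c' : ob C) (q' : forall j, hom (fob F j) c'), IsCocone F c' q' ->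
    exists u : hom c c',
      (forall j, heq (cmp u (q j)) (q' j)) /\
      (forall u' : hom c c', (forall j, heq (cmp u' (q j)) (q' j)) -> heq u' u).

Arguments IsColimit {J C} F c q.

Definition HasFiniteLimits (C : Cat) : Prop :=
  forall J : Cat, IsCat J -> FiniteCat J -> forall F : Fun J C, IsFun F ->
    exists (c : ob C) (p : forall j, hom c (fob F j)), IsLimit F c p.

Definition HasFiniteColimits (C : Cat) : Prop :=
  forall J : Cat, IsCat J -> FiniteCat J -> forall F : Fun J C, IsFun F ->
    exists (c : ob C) (q : forall j, hom (fob F j) c), IsColimit F c q.

(* [le v u] means v <= u; as a category, there is an arrow u -> v iff u >= v. *)
Record ProIndex (T : Type) (le : T -> T -> Prop) : Prop := {
  pi_refl : forall u, le u u;
  pi_trans : forall u v w, le u v -> le v w -> le u w;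
  pi_antisym : forall u v, le u v -> le v u -> u = v;
  pi_inhabited : exists u : T, True;
  pi_directed : forall u v, exists w, le u w /\ le v w;
  pi_cofinite : forall u, exists l : list T, forall v, le v u -> In v l;
  pi_infheight : forall n : nat, exists f : nat -> T,
      forall i, i < n -> le (f i) (f (S i)) /\ f i <> f (S i) }.

Arguments ProIndex {T} le.

Record ProObj (C : Cat) := {
  pT : Type;
  ple : pT -> pT -> Prop;
  pF : pT -> ob C;
  pFm : forall u v, ple v u -> hom (pF u) (pF v) }.
Arguments pT {_} _.
Arguments ple {_} _ _ _.
Arguments pF {_} _ _.
Arguments pFm {_} _ {_ _} _.

Definition IsProObj (C : Cat) (P : ProObj C) : Prop :=
  ProIndex (ple P) /\
  (forall u (H : ple P u u), heq (pFm P H) (cid (pF P u))) /\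
  (forall u v w (H1 : ple P v u) (H2 : ple P w v) (H3 : ple P w u),
      heq (pFm P H3) (cmp (pFm P H2) (pFm P H1))).

Arguments IsProObj {C} P.

(* Representatives (alpha, phi) of morphisms F -> G: alpha : B -> A strictly
   increasing (stored as: monotone and injective on comparable pairs), and
   phi : F o alpha -> G natural. *)
Record ProHom (C : Cat) (F G : ProObj C) := {
  pal : pT G -> pT F;
  pmono : forall b b', ple G b' b -> ple F (pal b') (pal b);
  pstrict : forall b b', ple G b' b -> b' <> b -> pal b' <> pal b;
  pphi : forall b, hom (pF F (pal b)) (pF G b);
  pnat : forall b b' (H : ple G b' b),
      heq (cmp (pFm G H) (pphi b)) (cmp (pphi b') (pFm F (pmono b b' H))) }.
Arguments pal {_ _ _} _ _.
Arguments pmono {_ _ _} _ {_ _} _.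
Arguments pphi {_ _ _} _ _.
Arguments pstrict {_ _ _} _ {_ _} _ _.
Arguments pnat {_ _ _} _ {_ _} _.

Arguments ProHom {C} F G.

Definition ProGe (C : Cat) (F G : ProObj C) (f' f : ProHom F G) : Prop :=
  (forall b, ple F (pal f b) (pal f' b)) /\
  (forall b (H : ple F (pal f b) (pal f' b)),
      heq (pphi f' b) (cmp (pphi f b) (pFm F H))).

Definition ProEq (C : Cat) (F G : ProObj C) : ProHom F G -> ProHom F G -> Prop :=
  clos_refl_sym_trans _ (@ProGe C F G).

Arguments ProGe {C F G} f' f.
Arguments ProEq {C F G} _ _.

Section ProBar.
Variables (C : Cat) (HC : IsCat C).

Definition pro_id (F : ProObj C) : ProHom F F.
Proof.
  refine {| pal := fun b => b; pmono := fun b b' H => H;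
            pstrict := fun b b' _ ne => ne; pphi := fun b => cid (pF F b) |}.
  intros b b' H. simpl.
  apply (heq_trans HC (cid_r HC _)). apply (heq_sym HC). apply (cid_l HC).
Defined.

Definition pro_cmp (F G H : ProObj C) (g : ProHom G H) (f : ProHom F G) :
  ProHom F H.
Proof.
  refine {| pal := fun b => pal f (pal g b);
            pmono := fun b b' K => pmono f (pmono g K);
            pphi := fun b => cmp (pphi g b) (pphi f (pal g b)) |}.
  - intros b b' K ne. apply (pstrict f). + exact (pmono g K).
    + exact (pstrict g K ne).
  - intros b b' K. simpl.
    apply (heq_trans HC (cmp_assoc HC _ _ _)).
    apply (heq_trans HC (cmp_cong HC (pnat g K) (heq_refl HC _))).
    apply (heq_trans HC (heq_sym HC (cmp_assoc HC _ _ _))).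
    apply (heq_trans HC (cmp_cong HC (heq_refl HC _) (pnat f (pmono g K)))).
    apply (cmp_assoc HC).
Defined.

Definition ProBar : Cat :=
  {| ob := { P : ProObj C | IsProObj P };
     hom := fun X Y => ProHom (proj1_sig X) (proj1_sig Y);
     heq := fun X Y => @ProEq C (proj1_sig X) (proj1_sig Y);
     cid := fun X => pro_id (proj1_sig X);
     cmp := fun X Y Z g f => @pro_cmp (proj1_sig X) (proj1_sig Y) (proj1_sig Z) g f |}.
End ProBar.

(* ---------- Diagrams A -> C^D  (viewed as A x D -> C) ---------- *)
Record ProDiag (C D : Cat) := {
  dT : Type;
  dle : dT -> dT -> Prop;
  dX : dT -> Fun D C;
  dXa : forall u v, dle v u -> forall d, hom (fob (dX u) d) (fob (dX v) d) }.
Arguments dT {_ _} _.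
Arguments dle {_ _} _ _ _.
Arguments dX {_ _} _ _.
Arguments dXa {_ _} _ {_ _} _ _.

Definition IsProDiag (C D : Cat) (X : ProDiag C D) : Prop :=
  ProIndex (dle X) /\
  (forall u, IsFun (dX X u)) /\
  (forall u v (H : dle X v u) d d' (f : hom d d'),
      heq (cmp (fmap (dX X v) f) (dXa X H d)) (cmp (dXa X H d') (fmap (dX X u) f))) /\
  (forall u (H : dle X u u) d, heq (dXa X H d) (cid _)) /\
  (forall u v w (H1 : dle X v u) (H2 : dle X w v) (H3 : dle X w u) d,
      heq (dXa X H3 d) (cmp (dXa X H2 d) (dXa X H1 d))).

Arguments IsProDiag {C D} X.

Definition jD_obj (C D : Cat) (X : ProDiag C D) (d : ob D) : ProObj C :=
  {| pT := dT X; ple := dle X; pF := fun u => fob (dX X u) d;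
     pFm := fun u v H => dXa X H d |}.
Arguments jD_obj {C D} X d.

Lemma jD_obj_ok (C D : Cat) (X : ProDiag C D) (HX : IsProDiag X) (d : ob D) :
  IsProObj (jD_obj X d).
Proof.
  destruct HX as (HA & _ & _ & Hid & Hc). split; [exact HA|]. split.
  - intros u H. exact (Hid u H d).
  - intros u v w H1 H2 H3. exact (Hc u v w H1 H2 H3 d).
Qed.

Definition jD_map (C D : Cat) (HC : IsCat C) (X : ProDiag C D) (HX : IsProDiag X)
  (d d' : ob D) (f : hom d d') : ProHom (jD_obj X d) (jD_obj X d').
Proof.
  refine (@Build_ProHom C (jD_obj X d) (jD_obj X d') (fun b => b)
            (fun b b' H => H) (fun b b' _ ne => ne)
            (fun u => fmap (dX X u) f) _).
  intros b b' H. simpl. apply (heq_sym HC).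
  destruct HX as (_ & _ & Hn & _). exact (Hn b b' H d d' f).
Defined.

Arguments jD_obj_ok {C D X} HX d.
Arguments jD_map {C D} HC {X} HX {d d'} f.

Definition jD (C D : Cat) (HC : IsCat C) (X : ProDiag C D) (HX : IsProDiag X) :
  Fun D (ProBar C HC) :=
  @Build_Fun D (ProBar C HC)
    (fun d => exist _ (jD_obj X d) (jD_obj_ok HX d))
    (fun d d' f => jD_map HC HX f).

Arguments jD {C D} HC {X} HX.

Definition levelObj (C : Cat) (T : Type) (le : T -> T -> Prop) (Lo : T -> ob C)
  (Lm : forall u v, le v u -> hom (Lo u) (Lo v)) : ProObj C :=
  {| pT := T; ple := le; pF := Lo; pFm := Lm |}.

Arguments levelObj {C T le} Lo Lm.

Definition limLeg (C D : Cat) (X : ProDiag C D) (Lo : dT X -> ob C)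
  (Lm : forall u v, dle X v u -> hom (Lo u) (Lo v))
  (pi : forall u d, hom (Lo u) (fob (dX X u) d))
  (Hc : forall u v (H : dle X v u) d,
      heq (cmp (dXa X H d) (pi u d)) (cmp (pi v d) (Lm u v H)))
  (d : ob D) : ProHom (levelObj Lo Lm) (jD_obj X d) :=
  @Build_ProHom C (levelObj Lo Lm) (jD_obj X d) (fun b => b)
    (fun b b' H => H) (fun b b' _ ne => ne) (fun u => pi u d)
    (fun b b' H => Hc b b' H d).

Arguments limLeg {C D X Lo Lm} pi Hc d.

Definition colimLeg (C D : Cat) (X : ProDiag C D) (Lo : dT X -> ob C)
  (Lm : forall u v, dle X v u -> hom (Lo u) (Lo v))
  (io : forall u d, hom (fob (dX X u) d) (Lo u))
  (Hc : forall u v (H : dle X v u) d,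
      heq (cmp (Lm u v H) (io u d)) (cmp (io v d) (dXa X H d)))
  (d : ob D) : ProHom (jD_obj X d) (levelObj Lo Lm) :=
  @Build_ProHom C (jD_obj X d) (levelObj Lo Lm) (fun b => b)
    (fun b b' H => H) (fun b b' _ ne => ne) (fun u => io u d)
    (fun b b' H => Hc b b' H d).
Arguments colimLeg {C D X Lo Lm} io Hc d.

(* A cone over a finite diagram in pro-C is a finite family of compatibilities, each of
   which only holds from some level on, i.e. after restricting the representatives along
   the transition maps of the source; the index posets being directed, they all hold from
   one common level on.  Since the index posets are cofinite and of infinite height,
   there is a strictly increasing reindexing lying above any prescribed levels, and along
   it the cone becomes an honest cone at every level, which factors uniquely through the
   levelwise limit.  Uniqueness in pro-C follows because two representatives agreeing from
   some level on at every index are both dominated by a common reindexing.  Colimits are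
   dual, with the reindexing now going into the index poset of the diagram. *)

From Stdlib Require Import List Relations Setoid Morphisms Lia Classical ClassicalEpsilon Wf_nat.

Lemma dependent_choice (I : Type) (T : I -> Type) (P : forall i, T i -> Prop) :
  (forall i, exists x, P i x) -> exists f : forall i, T i, forall i, P i (f i).
Proof.
  intros H. exists (fun i => proj1_sig (constructive_indefinite_description _ (H i))).
  intros i. exact (proj2_sig (constructive_indefinite_description _ (H i))).
Qed.

Section ProIndexTheory.
Variables (A : Type) (le : A -> A -> Prop) (HA : ProIndex le).

Definition upward_closed (I : Type) (Q : I -> A -> Prop) : Prop :=
  forall i a w, Q i a -> le a w -> Q i w.
Arguments upward_closed {I} Q.

Lemma bound_list {I : Type} (Q : I -> A -> Prop) (l : list I) (a0 : A) :
  upward_closed Q -> (forall i, In i l -> exists a, Q i a) ->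
  exists w, le a0 w /\ forall i, In i l -> Q i w.
Proof.
  intros Hup. induction l as [|i l IH]; intros Hex.
  - exists a0. split; [apply (pi_refl _ _ HA)|intros _ []].
  - destruct IH as [w [Hw HQ]]; [intros j Hj; apply Hex; right; exact Hj|].
    destruct (Hex i (or_introl eq_refl)) as [a Ha].
    destruct (pi_directed _ _ HA a w) as [z [Haz Hwz]].
    exists z. split; [exact (pi_trans _ _ HA _ _ _ Hw Hwz)|].
    intros j [<-|Hj]; eauto.
Qed.

Lemma bound_ob {D : Cat} (Q : ob D -> A -> Prop) (a0 : A) :
  FiniteCat D -> upward_closed Q -> (forall j, exists a, Q j a) ->
  exists w, le a0 w /\ forall j, Q j w.
Proof.
  intros [[l Hl] _] Hup Hex.
  destruct (bound_list Q l a0 Hup (fun j _ => Hex j)) as [w [Hw HQ]]. eauto.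
Qed.

Lemma bound_hom {D : Cat} (Q : forall j k : ob D, hom j k -> A -> Prop) :
  FiniteCat D ->
  (forall j k f a w, Q j k f a -> le a w -> Q j k f w) ->
  (forall j k f g w, heq f g -> Q j k g w -> Q j k f w) ->
  (forall j k f, exists a, Q j k f a) ->
  exists w, forall j k f, Q j k f w.
Proof.
  intros HD Hup Hcong Hex. destruct (pi_inhabited _ _ HA) as [a0 _].
  destruct (bound_ob (fun j w => forall k f, Q j k f w) a0 HD) as [w [_ Hw]]; eauto.
  { intros j a w Ha Haw k f. eauto. }
  intros j. destruct (bound_ob (fun k w => forall f, Q j k f w) a0 HD) as [w [_ Hw]]; eauto.
  { intros k a w Ha Haw f. eauto. }
  intros k. destruct HD as [_ Hhom]. destruct (Hhom j k) as [l Hl].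
  destruct (bound_list (Q j k) l a0) as [w [_ Hw]]; eauto.
  { intros f a w. eauto. }
  exists w. intros f. destruct (Hl f) as [g [Hg Hfg]]. eauto.
Qed.

Lemma chain_le (f : nat -> A) n :
  (forall i, i < n -> le (f i) (f (S i)) /\ f i <> f (S i)) ->
  forall i j, i <= j -> j <= n -> le (f i) (f j).
Proof.
  intros Hf i j Hij. induction Hij as [|j Hij IH]; intros Hn.
  - apply (pi_refl _ _ HA).
  - apply (pi_trans _ _ HA _ (f j)); [apply IH; lia|apply Hf; lia].
Qed.

(* If [a] were maximal, it would be an upper bound of a chain of length [length l],
   putting [length l + 1] distinct elements into the list [l] covering the elements
   below [a]. *)
Lemma exists_strict_ub (a : A) : exists w, le a w /\ a <> w.
Proof.
  destruct (pi_cofinite _ _ HA a) as [l Hl].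
  destruct (pi_infheight _ _ HA (length l)) as [f Hf].
  destruct (pi_directed _ _ HA a (f (length l))) as [z [Ha Hz]].
  exists z; split; [exact Ha|]. intros <-.
  set (n := length l) in *.
  assert (Hinj : forall i j, i < j -> j <= n -> f i <> f j).
  { intros i j Hij Hj E.
    assert (H1 : le (f (S i)) (f j)) by (apply (chain_le f n Hf); lia).
    rewrite <- E in H1.
    apply (proj2 (Hf i ltac:(lia))), (pi_antisym _ _ HA); [apply Hf; lia|exact H1]. }
  assert (Hnodup : forall m k, k + m <= S n -> NoDup (map f (seq k m))).
  { induction m as [|m IH]; intros k Hk; simpl; constructor.
    - intros Hin. apply in_map_iff in Hin. destruct Hin as [x [Ex Hx]].
      apply in_seq in Hx. apply (Hinj k x); [lia|lia|symmetry; exact Ex].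
    - apply IH; lia. }
  assert (Hincl : incl (map f (seq 0 (S n))) l).
  { intros x Hx. apply in_map_iff in Hx. destruct Hx as [i [<- Hi]].
    apply in_seq in Hi. apply Hl, (pi_trans _ _ HA _ _ _ (chain_le f n Hf i n ltac:(lia) ltac:(lia)) Hz). }
  pose proof (NoDup_incl_length (Hnodup (S n) 0 ltac:(lia)) Hincl) as Hlen.
  rewrite length_map, length_seq in Hlen. unfold n in Hlen. lia.
Qed.

Lemma exists_strict_ub_list (l : list A) : exists w, forall x, In x l -> le x w /\ x <> w.
Proof.
  destruct (pi_inhabited _ _ HA) as [a0 _].
  destruct (bound_list (fun x w => le x w) l a0) as [u [_ Hu]].
  - intros x a w. apply (pi_trans _ _ HA).
  - intros x _. exists x. apply (pi_refl _ _ HA).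
  - destruct (exists_strict_ub u) as [w [Huw Hne]]. exists w. intros x Hx. split.
    + exact (pi_trans _ _ HA _ _ _ (Hu x Hx) Huw).
    + intros ->. apply Hne, (pi_antisym _ _ HA); [exact Huw|exact (Hu w Hx)].
Qed.

Variables (B : Type) (leB : B -> B -> Prop) (HB : ProIndex leB).

(* The depth of [b] is the least length of a list covering the elements below [b]. *)
Lemma exists_strict_depth :
  exists n : B -> nat, forall b b', leB b' b -> b' <> b -> n b' < n b.
Proof.
  set (covers b k := exists l : list B, length l = k /\ forall v, leB v b -> In v l).
  assert (Hleast : forall b, exists k, covers b k /\ forall m, covers b m -> k <= m).
  { intros b. destruct (dec_inh_nat_subset_has_unique_least_element (covers b))
      as [k [Hk _]]; [intros k; apply classic| |exists k; exact Hk].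
    destruct (pi_cofinite _ _ HB b) as [l Hl]. exists (length l), l. auto. }
  destruct (dependent_choice _ (fun _ => nat) _ Hleast) as [n Hn]. exists n.
  intros b b' Hb'b Hne. destruct (Hn b) as [[l [Hlen Hcov]] _].
  destruct (in_split b l (Hcov b (pi_refl _ _ HB b))) as [l1 [l2 ->]].
  enough (covers b' (length (l1 ++ l2))) as Hcov'.
  { pose proof (proj2 (Hn b') _ Hcov'). rewrite length_app in *. simpl in Hlen. lia. }
  exists (l1 ++ l2). split; [reflexivity|]. intros v Hv.
  pose proof (Hcov v (pi_trans _ _ HB _ _ _ Hv Hb'b)) as Hin.
  apply in_app_or in Hin. apply in_or_app. destruct Hin as [?|[<-|?]]; auto.
  exfalso. apply Hne, (pi_antisym _ _ HB); assumption.
Qed.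

(* Iterate [g := step g], where [step g b] lies strictly above all [g v], [v <= b],
   and stop at the depth of [b]. *)
Lemma exists_strict_mono_above (g : B -> A) : exists al : B -> A,
  (forall b, le (g b) (al b)) /\
  (forall b b', leB b' b -> le (al b') (al b)) /\
  (forall b b', leB b' b -> b' <> b -> al b' <> al b).
Proof.
  assert (Hstep : forall fb : (B -> A) * B, exists w,
     forall v, leB v (snd fb) -> le (fst fb v) w /\ fst fb v <> w).
  { intros [f b]. destruct (pi_cofinite _ _ HB b) as [l Hl].
    destruct (exists_strict_ub_list (map f l)) as [w Hw].
    exists w. intros v Hv. apply Hw, in_map, Hl, Hv. }
  destruct (dependent_choice _ (fun _ => A) _ Hstep) as [step Hs].
  destruct exists_strict_depth as [n Hn].
  set (beta k := Nat.iter k (fun f b => step (f, b)) g).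
  assert (Hbeta : forall k m b, k <= m -> le (beta k b) (beta m b)).
  { intros k m b Hkm. induction Hkm as [|m _ IH]; [apply (pi_refl _ _ HA)|].
    apply (pi_trans _ _ HA _ _ _ IH), (Hs (beta m, b)), (pi_refl _ _ HB). }
  assert (Hjump : forall b b', leB b' b -> b' <> b ->
     le (beta (n b') b') (beta (S (n b')) b) /\ beta (n b') b' <> beta (S (n b')) b /\
     le (beta (S (n b')) b) (beta (n b) b)).
  { intros b b' Hb'b Hne. split; [|split].
    - exact (proj1 (Hs (beta (n b'), b) b' Hb'b)).
    - exact (proj2 (Hs (beta (n b'), b) b' Hb'b)).
    - apply Hbeta. specialize (Hn b b' Hb'b Hne). lia. }
  exists (fun b => beta (n b) b). split; [|split].
  - intros b. apply (Hbeta 0). lia.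
  - intros b b' Hb'b. destruct (classic (b' = b)) as [->|Hne]; [apply (pi_refl _ _ HA)|].
    destruct (Hjump b b' Hb'b Hne) as [H1 [_ H3]]. exact (pi_trans _ _ HA _ _ _ H1 H3).
  - intros b b' Hb'b Hne E. destruct (Hjump b b' Hb'b Hne) as [H1 [H2 H3]].
    apply H2, (pi_antisym _ _ HA); [exact H1|]. rewrite E. exact H3.
Qed.

Lemma exists_strict_mono_eventually (Q : B -> A -> Prop) :
  upward_closed Q -> (forall b, exists a, Q b a) -> exists al : B -> A,
  (forall b b', leB b' b -> le (al b') (al b)) /\
  (forall b b', leB b' b -> b' <> b -> al b' <> al b) /\
  (forall b, Q b (al b)).
Proof.
  intros Hup Hex. destruct (dependent_choice _ (fun _ => A) _ Hex) as [g Hg].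
  destruct (exists_strict_mono_above g) as [al [Hgal [Hmono Hstrict]]].
  exists al. split; [exact Hmono|split; [exact Hstrict|]]. intros b. exact (Hup b _ _ (Hg b) (Hgal b)).
Qed.
End ProIndexTheory.
Arguments upward_closed {A} le {I} Q.

Section ProCategory.
Variables (C : Cat) (HC : IsCat C).

#[local] Instance heq_equivalence (a b : ob C) : Equivalence (@heq C a b).
Proof. split; red; intros; [apply (heq_refl HC)|apply (heq_sym HC)|eapply (heq_trans HC)]; eauto. Qed.

#[local] Instance cmp_proper (a b c : ob C) : Proper (heq ==> heq ==> heq) (@cmp C a b c).
Proof. intros f f' Hf g g' Hg. apply (cmp_cong HC); assumption. Qed.

Lemma limit_hom_ext (J : Cat) (F : Fun J C) c p : IsLimit F c p ->
  forall c' (x y : hom c' c), (forall j, heq (cmp (p j) x) (cmp (p j) y)) -> heq x y.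
Proof.
  intros [Hcone Huniv] c' x y Hxy.
  destruct (Huniv c' (fun j => cmp (p j) y)) as [u [_ Hu]].
  { intros j k f. rewrite (cmp_assoc HC), Hcone. reflexivity. }
  rewrite (Hu x Hxy). symmetry. apply Hu. reflexivity.
Qed.

Lemma colimit_hom_ext (J : Cat) (F : Fun J C) c q : IsColimit F c q ->
  forall c' (x y : hom c c'), (forall j, heq (cmp x (q j)) (cmp y (q j))) -> heq x y.
Proof.
  intros [Hcocone Huniv] c' x y Hxy.
  destruct (Huniv c' (fun j => cmp y (q j))) as [u [_ Hu]].
  { intros j k f. rewrite <- (cmp_assoc HC), Hcocone. reflexivity. }
  rewrite (Hu x Hxy). symmetry. apply Hu. reflexivity.
Qed.

Definition InverseSystem {T : Type} (le : T -> T -> Prop) (o : T -> ob C)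
  (m : forall u v, le v u -> hom (o u) (o v)) : Prop :=
  ProIndex le /\ (forall u (H : le u u), heq (m u u H) (cid _)) /\
  (forall u v w (H1 : le v u) (H2 : le w v) (H3 : le w u),
      heq (m u w H3) (cmp (m v w H2) (m u v H1))).

Section InverseSystemTheory.
Context {T : Type} {le : T -> T -> Prop} {o : T -> ob C}
  {m : forall u v, le v u -> hom (o u) (o v)} (HS : InverseSystem le o m).

Lemma sys_id u (H : le u u) : heq (m u u H) (cid _).
Proof. apply (proj1 (proj2 HS)). Qed.

Lemma sys_comp u v w (H1 : le v u) (H2 : le w v) (H3 : le w u) :
  heq (cmp (m v w H2) (m u v H1)) (m u w H3).
Proof. symmetry. apply (proj2 (proj2 HS)). Qed.

Lemma sys_irr u v (H H' : le v u) : heq (m u v H) (m u v H').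
Proof.
  rewrite <- (sys_comp u u v (pi_refl _ _ (proj1 HS) u) H' H), sys_id.
  apply (cid_r HC).
Qed.

Lemma sys_path u v v' w (H1 : le v u) (H2 : le w v) (H1' : le v' u) (H2' : le w v') :
  heq (cmp (m v w H2) (m u v H1)) (cmp (m v' w H2') (m u v' H1')).
Proof.
  rewrite (sys_comp u v w H1 H2 (pi_trans _ _ (proj1 HS) _ _ _ H2 H1)).
  symmetry. apply sys_comp.
Qed.
End InverseSystemTheory.

Lemma proobj_system (P : ProObj C) : IsProObj P -> InverseSystem (ple P) (pF P) (@pFm C P).
Proof. exact (fun HP => HP). Qed.

Definition agree_from (F : ProObj C) (x y : pT F) (c : ob C)
  (f : hom (pF F x) c) (g : hom (pF F y) c) (w : pT F) : Prop :=
  exists (Hx : ple F x w) (Hy : ple F y w), heq (cmp f (pFm F Hx)) (cmp g (pFm F Hy)).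

Section AgreeFrom.
Variables (F : ProObj C) (HF : IsProObj F).

Lemma agree_from_above x y c (f : hom (pF F x) c) (g : hom (pF F y) c) w z :
  agree_from F x y c f g w -> ple F w z ->
  forall (Hx : ple F x z) (Hy : ple F y z), heq (cmp f (pFm F Hx)) (cmp g (pFm F Hy)).
Proof.
  intros [Hxw [Hyw E]] Hwz Hx Hy. pose proof (proobj_system _ HF) as HS.
  rewrite <- (sys_comp HS _ _ _ Hwz Hxw Hx), <- (sys_comp HS _ _ _ Hwz Hyw Hy).
  rewrite !(cmp_assoc HC), E. reflexivity.
Qed.

Lemma agree_from_mono x y c (f : hom (pF F x) c) (g : hom (pF F y) c) w z :
  agree_from F x y c f g w -> ple F w z -> agree_from F x y c f g z.
Proof.
  intros Hag Hwz. pose proof Hag as [Hxw [Hyw _]]. pose proof (proj1 HF) as HA.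
  exists (pi_trans _ _ HA _ _ _ Hxw Hwz), (pi_trans _ _ HA _ _ _ Hyw Hwz).
  apply (agree_from_above _ _ _ _ _ _ _ Hag Hwz).
Qed.

Lemma agree_from_cong x y c (f f' : hom (pF F x) c) (g g' : hom (pF F y) c) w :
  heq f f' -> heq g g' -> agree_from F x y c f g w -> agree_from F x y c f' g' w.
Proof. intros Hf Hg [Hx [Hy E]]. exists Hx, Hy. rewrite <- Hf, <- Hg. exact E. Qed.

Lemma proeq_agree_from (G : ProObj C) (f g : ProHom F G) : ProEq f g ->
  forall b, exists w, agree_from F (pal f b) (pal g b) _ (pphi f b) (pphi g b) w.
Proof.
  pose proof (proobj_system _ HF) as HS. pose proof (proj1 HF) as HA.
  induction 1 as [f g [Hle Hphi]|f|f g _ IH|f g h _ IH1 _ IH2]; intros b.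
  - exists (pal f b), (pi_refl _ _ HA _), (Hle b).
    rewrite (sys_id HS), (cid_r HC). apply Hphi.
  - exists (pal f b), (pi_refl _ _ HA _), (pi_refl _ _ HA _). reflexivity.
  - destruct (IH b) as [w [Hx [Hy E]]]. exists w, Hy, Hx. symmetry. exact E.
  - destruct (IH1 b) as [w1 Hw1]. destruct (IH2 b) as [w2 Hw2].
    destruct (pi_directed _ _ HA w1 w2) as [w [H1 H2]].
    apply (agree_from_mono _ _ _ _ _ _ _ Hw1) in H1 as [Hf [Hg E1]].
    apply (agree_from_mono _ _ _ _ _ _ _ Hw2) in H2 as [Hg' [Hh E2]].
    exists w, Hf, Hh. rewrite E1, <- E2. apply (cmp_cong HC); [reflexivity|apply (sys_irr HS)].
Qed.

Variables (G : ProObj C) (HG : IsProObj G).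

Lemma exists_reindex_above (f : ProHom F G) (Q : pT G -> pT F -> Prop) :
  upward_closed (ple F) Q -> (forall b, exists a, Q b a) ->
  exists h : ProHom F G, ProGe h f /\ forall b, Q b (pal h b).
Proof.
  intros Hup Hex. pose proof (proobj_system _ HF) as HS. pose proof (proj1 HF) as HA.
  destruct (exists_strict_mono_eventually _ _ HA _ _ (proj1 HG)
    (fun b a => Q b a /\ ple F (pal f b) a)) as [al [Hmono [Hstrict HQ]]].
  { intros b a a' [Ha Hfa] Haa'. split; [exact (Hup b _ _ Ha Haa')|exact (pi_trans _ _ HA _ _ _ Hfa Haa')]. }
  { intros b. destruct (Hex b) as [a Ha].
    destruct (pi_directed _ _ HA a (pal f b)) as [a' [Haa' Hfa']].
    exists a'. split; [exact (Hup b _ _ Ha Haa')|exact Hfa']. }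
  set (Hle b := proj2 (HQ b)).
  unshelve eexists (Build_ProHom _ F G al Hmono Hstrict (fun b => cmp (pphi f b) (pFm F (Hle b))) _).
  - intros b b' H. rewrite (cmp_assoc HC), (pnat f H), <- !(cmp_assoc HC).
    apply (cmp_cong HC); [reflexivity|apply (sys_path HS)].
  - split; [split; [exact Hle|]|exact (fun b => proj1 (HQ b))].
    intros b H. apply (cmp_cong HC); [reflexivity|apply (sys_irr HS)].
Qed.

Lemma agree_from_proeq (f g : ProHom F G) :
  (forall b, exists w, agree_from F (pal f b) (pal g b) _ (pphi f b) (pphi g b) w) ->
  ProEq f g.
Proof.
  intros Hag. destruct (exists_reindex_above f _ (fun b a w => agree_from_mono _ _ _ _ _ a w) Hag)
    as [h [[Hfh Hphi] Hagh]].
  apply (rst_trans _ _ _ h); [apply rst_sym, rst_step; split; assumption|].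
  apply rst_step. split.
  - intros b. destruct (Hagh b) as [_ [Hy _]]. exact Hy.
  - intros b Hy. rewrite (Hphi b (Hfh b)).
    exact (agree_from_above _ _ _ _ _ _ _ (Hagh b) (pi_refl _ _ (proj1 HF) _) _ _).
Qed.
End AgreeFrom.

Section Levelwise.
Variables (D : Cat) (HD : IsCat D) (HDf : FiniteCat D) (X : ProDiag C D) (HX : IsProDiag X).

Lemma diag_system d :
  InverseSystem (dle X) (fun u => fob (dX X u) d) (fun u v H => dXa X H d).
Proof. exact (jD_obj_ok HX d). Qed.

Lemma diag_irr d u v (H H' : dle X v u) : heq (dXa X H d) (dXa X H' d).
Proof. exact (sys_irr (diag_system d) u v H H'). Qed.

Lemma diag_comp d u v w (H1 : dle X v u) (H2 : dle X w v) (H3 : dle X w u) :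
  heq (cmp (dXa X H2 d) (dXa X H1 d)) (dXa X H3 d).
Proof. exact (sys_comp (diag_system d) u v w H1 H2 H3). Qed.

Lemma diag_nat u v (H : dle X v u) d d' (f : hom d d') :
  heq (cmp (fmap (dX X v) f) (dXa X H d)) (cmp (dXa X H d') (fmap (dX X u) f)).
Proof. destruct HX as (_ & _ & Hn & _). apply Hn. Qed.

Section LevelLimit.
Variables (Lo : dT X -> ob C) (Lm : forall u v, dle X v u -> hom (Lo u) (Lo v))
  (pi : forall u d, hom (Lo u) (fob (dX X u) d))
  (Hl : forall u, IsLimit (dX X u) (Lo u) (pi u))
  (Hc : forall u v (H : dle X v u) d,
      heq (cmp (dXa X H d) (pi u d)) (cmp (pi v d) (Lm u v H))).

Lemma level_limit_proobj : IsProObj (levelObj Lo Lm).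
Proof.
  split; [exact (proj1 HX)|split].
  - intros u H. apply (limit_hom_ext _ _ _ _ (Hl u)). intros d. cbn.
    rewrite <- Hc, (sys_id (diag_system d)), (cid_l HC), (cid_r HC). reflexivity.
  - intros u v w H1 H2 H3. apply (limit_hom_ext _ _ _ _ (Hl w)). intros d. cbn.
    rewrite <- Hc, <- (diag_comp d u v w H1 H2 H3), <- (cmp_assoc HC), Hc.
    rewrite !(cmp_assoc HC), Hc. reflexivity.
Qed.

Variable (HL : IsProObj (levelObj Lo Lm)).
Let L : ob (ProBar C HC) := exist _ (levelObj Lo Lm) HL.

Lemma level_limit_cone : IsCone (jD HC HX) L (limLeg pi Hc).
Proof.
  intros j k f. apply rst_step. split; [intros b; apply (pi_refl _ _ (proj1 HX))|].
  intros b H. cbn. rewrite (sys_id (proobj_system _ HL)), (cid_r HC).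
  apply (proj1 (Hl b)).
Qed.

Lemma level_limit_legs_monic (P : ProObj C) (HP : IsProObj P) (u u' : ProHom P (levelObj Lo Lm)) :
  (forall j, ProEq (pro_cmp C HC _ _ _ (limLeg pi Hc j) u) (pro_cmp C HC _ _ _ (limLeg pi Hc j) u')) ->
  ProEq u u'.
Proof.
  intros Hu. apply (agree_from_proeq P HP _ HL). intros b.
  pose proof (proj1 HP) as HA.
  destruct (pi_directed _ _ HA (pal u b) (pal u' b)) as [a0 [Ha0 Ha0']].
  destruct (bound_ob _ _ HA (fun j w => agree_from P (pal u b) (pal u' b) _
     (cmp (pi b j) (pphi u b)) (cmp (pi b j) (pphi u' b)) w) a0 HDf) as [w [Hw Hag]].
  - intros j a w. apply (agree_from_mono P HP).
  - intros j. exact (proeq_agree_from P HP _ _ _ (Hu j) b).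
  - exists w, (pi_trans _ _ HA _ _ _ Ha0 Hw), (pi_trans _ _ HA _ _ _ Ha0' Hw).
    apply (limit_hom_ext _ _ _ _ (Hl b)). intros j.
    rewrite !(cmp_assoc HC). exact (agree_from_above P HP _ _ _ _ _ _ _ (Hag j) (pi_refl _ _ HA w) _ _).
Qed.

Lemma cone_levelwise (P : ProObj C) (HP : IsProObj P)
  (p : forall d, ProHom P (jD_obj X d)) :
  IsCone (jD HC HX) (exist _ P HP) p ->
  exists al : dT X -> pT P,
    (forall b b', dle X b' b -> ple P (al b') (al b)) /\
    (forall b b', dle X b' b -> b' <> b -> al b' <> al b) /\
    (forall b j, ple P (pal (p j) b) (al b)) /\
    (forall b j k (f : hom j k) (Hj : ple P (pal (p j) b) (al b)) (Hk : ple P (pal (p k) b) (al b)),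
      heq (cmp (cmp (fmap (dX X b) f) (pphi (p j) b)) (pFm P Hj))
          (cmp (pphi (p k) b) (pFm P Hk))).
Proof.
  intros Hp. pose proof (proj1 HP) as HA.
  destruct (exists_strict_mono_eventually _ _ HA _ _ (proj1 HX) (fun b w => forall j k f,
    agree_from P (pal (p j) b) (pal (p k) b) _ (cmp (fmap (dX X b) f) (pphi (p j) b)) (pphi (p k) b) w))
    as [al [Hmono [Hstrict Hag]]].
  - intros b a w Ha Haw j k f. exact (agree_from_mono P HP _ _ _ _ _ _ _ (Ha j k f) Haw).
  - intros b. apply (bound_hom _ _ HA _ HDf).
    + intros j k f a w. apply (agree_from_mono P HP).
    + intros j k f g w Hfg. apply (agree_from_cong P); [|reflexivity].
      apply (cmp_cong HC); [|reflexivity].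
      symmetry. exact (fmap_cong _ _ _ (proj1 (proj2 HX) b) _ _ _ _ Hfg).
    + intros j k f. exact (proeq_agree_from P HP _ _ _ (Hp j k f) b).
  - exists al. split; [exact Hmono|split; [exact Hstrict|split]].
    + intros b j. destruct (Hag b j j (cid j)) as [Hj _]. exact Hj.
    + intros b j k f Hj Hk. exact (agree_from_above P HP _ _ _ _ _ _ _ (Hag b j k f) (pi_refl _ _ HA _) _ _).
Qed.

Lemma level_limit_is_limit : IsLimit (jD HC HX) L (limLeg pi Hc).
Proof.
  split; [exact level_limit_cone|]. intros [P HP] p Hp. cbn in p.
  pose proof (proobj_system P HP) as HSP.
  destruct (cone_levelwise P HP p Hp) as [al [Hmono [Hstrict [Hal Hcone]]]].
  set (psi b j := cmp (pphi (p j) b) (pFm P (Hal b j))).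
  assert (Hfac : forall b, exists x, forall j, heq (cmp (pi b j) x) (psi b j)).
  { intros b. destruct (proj2 (Hl b) _ (psi b)) as [x [Hx _]]; [|eauto].
    intros j k f. unfold psi. rewrite (cmp_assoc HC). apply Hcone. }
  destruct (dependent_choice _ (fun b => hom (pF P (al b)) (Lo b)) _ Hfac) as [phi Hphi].
  assert (Hnat : forall b b' (H : dle X b' b),
      heq (cmp (Lm b b' H) (phi b)) (cmp (phi b') (pFm P (Hmono b b' H)))).
  { intros b b' H. apply (limit_hom_ext _ _ _ _ (Hl b')). intros d.
    rewrite !(cmp_assoc HC), <- Hc, <- (cmp_assoc HC), !Hphi. unfold psi.
    rewrite (cmp_assoc HC), (pnat (p d) H), <- !(cmp_assoc HC).
    apply (cmp_cong HC); [reflexivity|apply (sys_path HSP)]. }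
  set (u := Build_ProHom C P (levelObj Lo Lm) al Hmono Hstrict phi Hnat).
  assert (Hlegs : forall j, ProGe (pro_cmp C HC _ _ _ (limLeg pi Hc j) u) (p j)).
  { intros j. split; [exact (fun b => Hal b j)|]. intros b H. cbn.
    rewrite Hphi. apply (cmp_cong HC); [reflexivity|apply (sys_irr HSP)]. }
  exists u. split; [intros j; apply rst_step, Hlegs|].
  intros u' Hu'. apply (level_limit_legs_monic P HP). intros j.
  exact (rst_trans _ _ _ _ _ (Hu' j) (rst_sym _ _ _ _ (rst_step _ _ _ _ (Hlegs j)))).
Qed.
End LevelLimit.

Section LevelColimit.
Variables (Lo : dT X -> ob C) (Lm : forall u v, dle X v u -> hom (Lo u) (Lo v))
  (io : forall u d, hom (fob (dX X u) d) (Lo u))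
  (Hl : forall u, IsColimit (dX X u) (Lo u) (io u))
  (Hc : forall u v (H : dle X v u) d,
      heq (cmp (Lm u v H) (io u d)) (cmp (io v d) (dXa X H d))).

Lemma level_colimit_proobj : IsProObj (levelObj Lo Lm).
Proof.
  split; [exact (proj1 HX)|split].
  - intros u H. apply (colimit_hom_ext _ _ _ _ (Hl u)). intros d. cbn.
    rewrite Hc, (sys_id (diag_system d)), (cid_l HC), (cid_r HC). reflexivity.
  - intros u v w H1 H2 H3. apply (colimit_hom_ext _ _ _ _ (Hl u)). intros d. cbn.
    rewrite Hc, <- (diag_comp d u v w H1 H2 H3), (cmp_assoc HC), <- Hc.
    rewrite <- !(cmp_assoc HC), <- Hc. reflexivity.
Qed.

Variable (HL : IsProObj (levelObj Lo Lm)).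
Let L : ob (ProBar C HC) := exist _ (levelObj Lo Lm) HL.

Lemma level_colimit_cocone : IsCocone (jD HC HX) L (colimLeg io Hc).
Proof.
  intros j k f. apply rst_step. split; [intros b; apply (pi_refl _ _ (proj1 HX))|].
  intros b H. cbn. rewrite (sys_id (diag_system j)), (cid_r HC).
  apply (proj1 (Hl b)).
Qed.

Lemma level_colimit_legs_epic (P : ProObj C) (HP : IsProObj P) (u u' : ProHom (levelObj Lo Lm) P) :
  (forall j, ProEq (pro_cmp C HC _ _ _ u (colimLeg io Hc j)) (pro_cmp C HC _ _ _ u' (colimLeg io Hc j))) ->
  ProEq u u'.
Proof.
  intros Hu. apply (agree_from_proeq _ HL _ HP). intros b.
  pose proof (proj1 HX) as HA.
  destruct (pi_directed _ _ HA (pal u b) (pal u' b)) as [a0 [Ha0 Ha0']].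
  destruct (bound_ob _ _ HA (fun j w => agree_from (jD_obj X j) (pal u b) (pal u' b) _
     (cmp (pphi u b) (io (pal u b) j)) (cmp (pphi u' b) (io (pal u' b) j)) w) a0 HDf)
    as [w [Hw Hag]].
  - intros j a w. apply (agree_from_mono _ (jD_obj_ok HX j)).
  - intros j. exact (proeq_agree_from _ (jD_obj_ok HX j) _ _ _ (Hu j) b).
  - exists w, (pi_trans _ _ HA _ _ _ Ha0 Hw), (pi_trans _ _ HA _ _ _ Ha0' Hw).
    apply (colimit_hom_ext _ _ _ _ (Hl w)). intros j. cbn.
    rewrite <- !(cmp_assoc HC), !Hc, !(cmp_assoc HC).
    exact (agree_from_above _ (jD_obj_ok HX j) _ _ _ _ _ _ _ (Hag j) (pi_refl _ _ HA w) _ _).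
Qed.

Lemma cocone_levelwise (P : ProObj C) (HP : IsProObj P)
  (q : forall d, ProHom (jD_obj X d) P) :
  IsCocone (jD HC HX) (exist _ P HP) q ->
  exists al : pT P -> dT X,
    (forall b b', ple P b' b -> dle X (al b') (al b)) /\
    (forall b b', ple P b' b -> b' <> b -> al b' <> al b) /\
    (forall b j, dle X (pal (q j) b) (al b)) /\
    (forall b j k (f : hom j k) (Hj : dle X (pal (q j) b) (al b)) (Hk : dle X (pal (q k) b) (al b)),
      heq (cmp (cmp (pphi (q k) b) (fmap (dX X (pal (q k) b)) f)) (dXa X Hk j))
          (cmp (pphi (q j) b) (dXa X Hj j))).
Proof.
  intros Hq. pose proof (proj1 HX) as HA.
  destruct (exists_strict_mono_eventually _ _ HA _ _ (proj1 HP) (fun b w => forall j k f,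
    agree_from (jD_obj X j) (pal (q k) b) (pal (q j) b) _
      (cmp (pphi (q k) b) (fmap (dX X (pal (q k) b)) f)) (pphi (q j) b) w))
    as [al [Hmono [Hstrict Hag]]].
  - intros b a w Ha Haw j k f.
    exact (agree_from_mono _ (jD_obj_ok HX j) _ _ _ _ _ _ _ (Ha j k f) Haw).
  - intros b. apply (bound_hom _ _ HA _ HDf).
    + intros j k f a w. apply (agree_from_mono _ (jD_obj_ok HX j)).
    + intros j k f g w Hfg. apply (agree_from_cong (jD_obj X j)); [|reflexivity].
      apply (cmp_cong HC); [reflexivity|].
      symmetry. exact (fmap_cong _ _ _ (proj1 (proj2 HX) _) _ _ _ _ Hfg).
    + intros j k f. exact (proeq_agree_from _ (jD_obj_ok HX j) _ _ _ (Hq j k f) b).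
  - exists al. split; [exact Hmono|split; [exact Hstrict|split]].
    + intros b j. destruct (Hag b j j (cid j)) as [Hj _]. exact Hj.
    + intros b j k f Hj Hk.
      exact (agree_from_above _ (jD_obj_ok HX j) _ _ _ _ _ _ _ (Hag b j k f) (pi_refl _ _ HA _) _ _).
Qed.

Lemma level_colimit_is_colimit : IsColimit (jD HC HX) L (colimLeg io Hc).
Proof.
  split; [exact level_colimit_cocone|]. intros [P HP] q Hq. cbn in q.
  destruct (cocone_levelwise P HP q Hq) as [al [Hmono [Hstrict [Hal Hcocone]]]].
  set (psi b j := cmp (pphi (q j) b) (dXa X (Hal b j) j)).
  assert (Hfac : forall b, exists x, forall j, heq (cmp x (io (al b) j)) (psi b j)).
  { intros b. destruct (proj2 (Hl (al b)) _ (psi b)) as [x [Hx _]]; [|eauto].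
    intros j k f. unfold psi.
    rewrite <- (cmp_assoc HC), <- (diag_nat _ _ (Hal b k) j k f), (cmp_assoc HC). apply Hcocone. }
  destruct (dependent_choice _ (fun b => hom (Lo (al b)) (pF P b)) _ Hfac) as [phi Hphi].
  assert (Hnat : forall b b' (H : ple P b' b),
      heq (cmp (pFm P H) (phi b)) (cmp (phi b') (Lm (al b) (al b') (Hmono b b' H)))).
  { intros b b' H. apply (colimit_hom_ext _ _ _ _ (Hl (al b))). intros d.
    rewrite <- !(cmp_assoc HC), Hc, (cmp_assoc HC (phi b')), !Hphi. unfold psi.
    rewrite (cmp_assoc HC (pFm P H)), (pnat (q d) H), <- !(cmp_assoc HC).
    apply (cmp_cong HC); [reflexivity|apply (sys_path (diag_system d))]. }
  set (u := Build_ProHom C (levelObj Lo Lm) P al Hmono Hstrict phi Hnat).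
  assert (Hlegs : forall j, ProGe (pro_cmp C HC _ _ _ u (colimLeg io Hc j)) (q j)).
  { intros j. split; [exact (fun b => Hal b j)|]. intros b H. cbn.
    rewrite Hphi. apply (cmp_cong HC); [reflexivity|apply diag_irr]. }
  exists u. split; [intros j; apply rst_step, Hlegs|].
  intros u' Hu'. apply (level_colimit_legs_epic P HP). intros j.
  exact (rst_trans _ _ _ _ _ (Hu' j) (rst_sym _ _ _ _ (rst_step _ _ _ _ (Hlegs j)))).
Qed.
End LevelColimit.

Lemma level_limit_exists : HasFiniteLimits C ->
  exists (Lo : dT X -> ob C) (Lm : forall u v, dle X v u -> hom (Lo u) (Lo v))
         (pi : forall u d, hom (Lo u) (fob (dX X u) d)),
    (forall u, IsLimit (dX X u) (Lo u) (pi u)) /\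
    (forall u v (H : dle X v u) d,
        heq (cmp (dXa X H d) (pi u d)) (cmp (pi v d) (Lm u v H))).
Proof.
  intros Hlim.
  destruct (dependent_choice _ (fun u => {c : ob C & forall d, hom c (fob (dX X u) d)})
    (fun u s => IsLimit (dX X u) (projT1 s) (projT2 s))) as [s Hs].
  { intros u. destruct (Hlim D HD HDf (dX X u) (proj1 (proj2 HX) u)) as [c [p Hp]].
    exists (existT _ c p). exact Hp. }
  destruct (dependent_choice {u & {v & dle X v u}}
    (fun i => hom (projT1 (s (projT1 i))) (projT1 (s (projT1 (projT2 i)))))
    (fun i m => forall d, heq (cmp (dXa X (projT2 (projT2 i)) d) (projT2 (s (projT1 i)) d))
                              (cmp (projT2 (s (projT1 (projT2 i))) d) m))) as [M HM].
  { intros [u [v H]]. cbn.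
    destruct (proj2 (Hs v) _ (fun d => cmp (dXa X H d) (projT2 (s u) d))) as [m [Hm _]].
    - intros j k f. rewrite (cmp_assoc HC), diag_nat, <- (cmp_assoc HC), (proj1 (Hs u)).
      reflexivity.
    - exists m. intros d. symmetry. apply Hm. }
  exists (fun u => projT1 (s u)), (fun u v H => M (existT _ u (existT _ v H))),
    (fun u => projT2 (s u)).
  split; [exact Hs|]. intros u v H. exact (HM (existT _ u (existT _ v H))).
Qed.

Lemma level_colimit_exists : HasFiniteColimits C ->
  exists (Lo : dT X -> ob C) (Lm : forall u v, dle X v u -> hom (Lo u) (Lo v))
         (io : forall u d, hom (fob (dX X u) d) (Lo u)),
    (forall u, IsColimit (dX X u) (Lo u) (io u)) /\
    (forall u v (H : dle X v u) d,
        heq (cmp (Lm u v H) (io u d)) (cmp (io v d) (dXa X H d))).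
Proof.
  intros Hcolim.
  destruct (dependent_choice _ (fun u => {c : ob C & forall d, hom (fob (dX X u) d) c})
    (fun u s => IsColimit (dX X u) (projT1 s) (projT2 s))) as [s Hs].
  { intros u. destruct (Hcolim D HD HDf (dX X u) (proj1 (proj2 HX) u)) as [c [q Hq]].
    exists (existT _ c q). exact Hq. }
  destruct (dependent_choice {u & {v & dle X v u}}
    (fun i => hom (projT1 (s (projT1 i))) (projT1 (s (projT1 (projT2 i)))))
    (fun i m => forall d, heq (cmp m (projT2 (s (projT1 i)) d))
                  (cmp (projT2 (s (projT1 (projT2 i))) d) (dXa X (projT2 (projT2 i)) d))))
    as [M HM].
  { intros [u [v H]]. cbn.
    destruct (proj2 (Hs u) _ (fun d => cmp (projT2 (s v) d) (dXa X H d))) as [m [Hm _]].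
    - intros j k f. rewrite <- (cmp_assoc HC), <- diag_nat, (cmp_assoc HC), (proj1 (Hs v)).
      reflexivity.
    - exists m. exact Hm. }
  exists (fun u => projT1 (s u)), (fun u v H => M (existT _ u (existT _ v H))),
    (fun u => projT2 (s u)).
  split; [exact Hs|]. intros u v H. exact (HM (existT _ u (existT _ v H))).
Qed.

End Levelwise.
End ProCategory.

Theorem corollary3p19 :
  forall (C : Cat) (HC : IsCat C) (D : Cat) (HD : IsCat D) (HDf : FiniteCat D)
    (X : ProDiag C D) (HX : IsProDiag X),
  (* 1. limits *)
  (HasFiniteLimits C ->
     (exists (Lo : dT X -> ob C) (Lm : forall u v, dle X v u -> hom (Lo u) (Lo v))
             (pi : forall u d, hom (Lo u) (fob (dX X u) d)),
        (forall u, IsLimit (dX X u) (Lo u) (pi u)) /\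
        (forall u v (H : dle X v u) d,
            heq (cmp (dXa X H d) (pi u d)) (cmp (pi v d) (Lm u v H)))) /\
     (forall (Lo : dT X -> ob C) (Lm : forall u v, dle X v u -> hom (Lo u) (Lo v))
             (pi : forall u d, hom (Lo u) (fob (dX X u) d))
             (Hl : forall u, IsLimit (dX X u) (Lo u) (pi u))
             (Hc : forall u v (H : dle X v u) d,
                 heq (cmp (dXa X H d) (pi u d)) (cmp (pi v d) (Lm u v H))),
        exists HL : IsProObj (levelObj Lo Lm),
          @IsLimit D (ProBar C HC) (jD HC HX) (exist _ (levelObj Lo Lm) HL)
            (@limLeg C D X Lo Lm pi Hc))) /\
  (* 2. colimits *)
  (HasFiniteColimits C ->
     (exists (Lo : dT X -> ob C) (Lm : forall u v, dle X v u -> hom (Lo u) (Lo v))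
             (io : forall u d, hom (fob (dX X u) d) (Lo u)),
        (forall u, IsColimit (dX X u) (Lo u) (io u)) /\
        (forall u v (H : dle X v u) d,
            heq (cmp (Lm u v H) (io u d)) (cmp (io v d) (dXa X H d)))) /\
     (forall (Lo : dT X -> ob C) (Lm : forall u v, dle X v u -> hom (Lo u) (Lo v))
             (io : forall u d, hom (fob (dX X u) d) (Lo u))
             (Hl : forall u, IsColimit (dX X u) (Lo u) (io u))
             (Hc : forall u v (H : dle X v u) d,
                 heq (cmp (Lm u v H) (io u d)) (cmp (io v d) (dXa X H d))),
        exists HL : IsProObj (levelObj Lo Lm),
          @IsColimit D (ProBar C HC) (jD HC HX) (exist _ (levelObj Lo Lm) HL)
            (@colimLeg C D X Lo Lm io Hc))).
Proof.
  intros C HC D HD HDf X HX. split; intros Hfin; split.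
  - exact (level_limit_exists C HC D HD HDf X HX Hfin).
  - intros Lo Lm pi Hl Hc. exists (level_limit_proobj C HC D X HX Lo Lm pi Hl Hc).
    apply level_limit_is_limit; assumption.
  - exact (level_colimit_exists C HC D HD HDf X HX Hfin).
  - intros Lo Lm io Hl Hc. exists (level_colimit_proobj C HC D X HX Lo Lm io Hl Hc).
    apply level_colimit_is_colimit; assumption.
Qed.
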